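(* Let $f(x,y)=\dfrac{(x+1)(y+1)}{x+y+1}$. The multiplicative subgroup of $\mathbb{Q}^{+}$ generated by the set $\{f(x,y) : x,y \text{ positive integers}\}$ is all of $\mathbb{Q}^{+}$.
   Context: $\mathbb{Q}^+$ denotes the multiplicative group of positive rational numbers. *)

From mathcomp Require Import all_boot all_order all_algebra.
Set Implicit Arguments. Unset Strict Implicit. Unset Printing Implicit Defensive.
Import Order.TTheory GRing.Theory Num.Theory.
Local Open Scope ring_scope.

Definition f (x y : nat) : rat :=
  (((x + 1) * (y + 1))%N)%:R / ((x + y + 1)%N)%:R.

Definition fvals (q : rat) : Prop :=
  exists x y : nat, (0 < x)%N /\ (0 < y)%N /\ q = f x y.

Inductive gen_subgroup (S : rat -> Prop) : rat -> Prop :=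
| gen_one : gen_subgroup S 1
| gen_base q : S q -> gen_subgroup S q
| gen_mul q r : gen_subgroup S q -> gen_subgroup S r -> gen_subgroup S (q * r)
| gen_inv q : gen_subgroup S q -> gen_subgroup S q^-1.

From mathcomp Require Import all_boot all_order all_algebra.
From mathcomp Require Import ring zify.
Import Order.TTheory GRing.Theory Num.Theory.
Set Implicit Arguments. Unset Strict Implicit. Unset Printing Implicit Defensive.
Local Open Scope ring_scope.

(* Every value of f is positive, so the generated group lies in Q+.  Conversely
   f 1 1 * f 1 2 = 4/3 * 3/2 = 2, and f 1 n = 2 (n+1) / (n+2) gives
   n + 2 = 2 (n+1) / f 1 n, so by induction every positive integer, hence every
   positive rational, is in the group. *)

Section GeneratedSubgroup.

Variable S : rat -> Prop.

Lemma gen_subgroup_div q r :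
  gen_subgroup S q -> gen_subgroup S r -> gen_subgroup S (q / r).
Proof. by move=> Gq Gr; apply: gen_mul => //; apply: gen_inv. Qed.

Lemma gen_subgroup_gt0 q :
  (forall s, S s -> 0 < s) -> gen_subgroup S q -> 0 < q.
Proof.
move=> S_gt0; elim=> [|s /S_gt0 //|s t _ s_gt0 _ t_gt0|s _ s_gt0].
- exact: ltr01.
- exact: mulr_gt0.
- by rewrite invr_gt0.
Qed.

Lemma gen_subgroup_gt0_rat q :
  (forall n, (0 < n)%N -> gen_subgroup S n%:R) -> 0 < q -> gen_subgroup S q.
Proof.
move=> Snat q_gt0; rewrite -[q]divq_num_den.
have num_gt0 : (0 < `|numq q|)%N by rewrite absz_gt0 numq_eq0 gt_eqF.
have den_gt0 : (0 < `|denq q|)%N by rewrite absz_gt0 denq_neq0.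
rewrite -[numq q]gez0_abs ?numq_ge0 1?ltW // -[denq q]gez0_abs ?denq_ge0 //.
by apply: gen_subgroup_div; apply: Snat.
Qed.

End GeneratedSubgroup.

Lemma f_gt0 x y : 0 < f x y.
Proof. by rewrite /f; apply: divr_gt0; rewrite ltr0n; lia. Qed.

Lemma f1n n : f 1 n = 2 * n.+1%:R / n.+2%:R.
Proof.
rewrite /f; have -> : ((1 + 1) * (n + 1))%N = (2 * n.+1)%N by lia.
have -> : (1 + n + 1)%N = n.+2 by lia.
by rewrite natrM.
Qed.

Lemma fvals_f1n n : (0 < n)%N -> gen_subgroup fvals (f 1 n).
Proof. by move=> n_gt0; apply: gen_base; exists 1%N, n. Qed.

Lemma gen_fvals_two : gen_subgroup fvals 2.
Proof.
have -> : 2 = f 1 1 * f 1 2 by rewrite !f1n; field.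
by apply: gen_mul; apply: fvals_f1n.
Qed.

Lemma gen_fvals_nat n : (0 < n)%N -> gen_subgroup fvals n%:R.
Proof.
case: n => [|[_|n _]] //; first exact: gen_one.
elim: n => [|n IHn]; first exact: gen_fvals_two.
have -> : n.+3%:R = 2 * n.+2%:R / f 1 n.+1 :> rat.
  by rewrite f1n; field; rewrite -!natrD !pnatr_eq0.
apply: gen_subgroup_div; last exact: fvals_f1n.
exact: gen_mul gen_fvals_two IHn.
Qed.

Theorem mainTheorem5 : forall q : rat, gen_subgroup fvals q <-> 0 < q.
Proof.
move=> q; split.
  by apply: gen_subgroup_gt0 => _ [x [y [_ [_ ->]]]]; apply: f_gt0.
exact: gen_subgroup_gt0_rat gen_fvals_nat.
Qed.
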